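(* On \(\mathcal F\), the Neveu–Schwarz operator \(L_1\) equals \(-D_{\mathcal F}\), where \[ D_{\mathcal F}=\sum_{n\ge1}x_n\frac{\partial}{\partial x_{n+1}}+\sum_{m\ge0}y_{m+1/2}\frac{\partial}{\partial y_{m+3/2}}. \]
   Context: \(\mathcal F=\mathbb C[x_1,x_2,\dots]\otimes\Lambda_{\mathbb C}(y_{1/2},y_{3/2},\dots)\) (identified with \(H^*(\mathrm{Fred}_0\times\mathrm{Fred}_{\mathrm{sa}}^1;\mathbb C)\), \(x_n\) and \(y_{m+1/2}\) being components of the even and odd Chern characters). Let \(\beta=\sqrt2\). For \(n>0\): \(a_{-n}=(-1)^{n-1}\frac{n!}{\beta}x_n\), \(a_n=(-1)^{n-1}\frac{\beta}{(n-1)!}\frac{\partial}{\partial x_n}\); \(a_0=0\). For \(m\ge0\): \(b_{-(m+1/2)}=(-1)^mm!\,y_{m+1/2}\), \(b_{m+1/2}=\frac{(-1)^m}{m!}\frac{\partial}{\partial y_{m+1/2}}\) (left derivative on the exterior algebra). \(L_n=\tfrac12\sum_{m\in\mathbb Z}:a_ma_{n-m}:+\tfrac14\sum_{r\in\mathbb Z+1/2}(n-2r):b_rb_{n-r}:\), where normal ordering places modes of negative index to the left of modes of positive index (with the Koszul sign when interchanging odd modes). *)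

(* Coefficient field: algC (algebraic complex numbers),
   a model of C sufficient since all scalars involved are algebraic. *)
From mathcomp Require Import all_boot all_order all_algebra algC.
Set Implicit Arguments. Unset Strict Implicit. Unset Printing Implicit Defensive.
Import Order.TTheory GRing.Theory Num.Theory.
Local Open Scope ring_scope.

(* A basis monomial of C[x_1,x_2,...] (x) Lambda(y_{1/2},y_{3/2},...) is a pair
   (alpha, S): alpha n = exponent of x_n (n >= 1; alpha 0 must be 0),
   S m = true iff y_{m+1/2} occurs; the exterior monomial is written
   y_{m1+1/2} /\ ... /\ y_{mr+1/2} with m1 < ... < mr.
   An element of the ambient space is a coefficient function. *)
Definition F := (nat -> nat) -> (nat -> bool) -> algC.

(* membership in the Fock space: finitely many variables, bounded degree,
   no variable x_0 -- i.e. genuine elements of C[x_1,..] (x) Lambda(y..). *)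
Definition inF (f : F) : Prop :=
  exists N : nat, forall alpha S, f alpha S != 0 ->
    [/\ alpha 0%N = 0%N,
        forall i, (alpha i <= N)%N &
        forall i, (N <= i)%N -> alpha i = 0%N /\ S i = false].

Definition Fzero : F := fun _ _ => 0.
Definition Fadd (f g : F) : F := fun a S => f a S + g a S.
Definition Fopp (f : F) : F := fun a S => - f a S.
Definition Fscale (c : algC) (f : F) : F := fun a S => c * f a S.

Definition mulx (n : nat) (f : F) : F := fun a S =>
  if (0 < a n)%N then f (fun i => (a i - (i == n))%N) S else 0.
Definition dx (n : nat) (f : F) : F := fun a S =>
  (a n).+1%:R * f (fun i => (a i + (i == n))%N) S.

Definition ycount (S : nat -> bool) (k : nat) : nat := \sum_(j < k) (S j : nat).

(* left multiplication by y_{k+1/2} and left derivative d/dy_{k+1/2} *)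
Definition muly (k : nat) (f : F) : F := fun a S =>
  if S k then (-1) ^+ ycount S k * f a (fun j => S j && (j != k)) else 0.
Definition dy (k : nat) (f : F) : F := fun a S =>
  if S k then 0 else (-1) ^+ ycount S k * f a (fun j => S j || (j == k)).

Definition beta : algC := sqrtC 2.

Definition amode (z : int) (f : F) : F :=
  match z with
  | Posz 0 => Fzero
  | Posz n.+1 => Fscale ((-1) ^+ n * beta / (n`!)%:R) (dx n.+1 f)
  | Negz k => Fscale ((-1) ^+ k * ((k.+1)`!)%:R / beta) (mulx k.+1 f)
  end.

(* fermionic modes: bmode k = b_{k+1/2}, k : int *)
Definition bmode (k : int) (f : F) : F :=
  match k with
  | Posz m => Fscale ((-1) ^+ m / (m`!)%:R) (dy m f)
  | Negz m => Fscale ((-1) ^+ m * (m`!)%:R) (muly m f)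
  end.

(* normal ordered products :a_m a_n: and :b_r b_s: (r = k+1/2, s = l+1/2):
   negative-index mode moved to the left, with Koszul sign for fermions *)
Definition nop_a (m n : int) (f : F) : F :=
  if (0 < m) && (n < 0) then amode n (amode m f) else amode m (amode n f).
Definition nop_b (k l : int) (f : F) : F :=
  if (0 <= k) && (l < 0) then Fopp (bmode l (bmode k f)) else bmode k (bmode l f).

(* truncation of L_n to |m| <= N and r = k+1/2 with |k| <= N:
   L_n = 1/2 sum_m :a_m a_{n-m}: + 1/4 sum_r (n-2r) :b_r b_{n-r}:,
   where n - r = (n - 1 - k) + 1/2 and n - 2r = n - (2k+1). *)
Definition Ltrunc (n : int) (N : nat) (f : F) : F := fun a S =>
  2^-1 * \sum_(i < (2 * N).+1) nop_a (i%:Z - N%:Z) (n - (i%:Z - N%:Z)) f a S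
  + 4^-1 * \sum_(i < (2 * N).+1)
       (n - (2 * (i%:Z - N%:Z) + 1))%:~R
         * nop_b (i%:Z - N%:Z) (n - 1 - (i%:Z - N%:Z)) f a S.

Definition Dtrunc (N : nat) (f : F) : F := fun a S =>
  \sum_(1 <= n < N) mulx n (dx n.+1 f) a S
  + \sum_(0 <= m < N) muly m (dy m.+1 f) a S.

Definition sums_to (s : nat -> F) (g : F) : Prop :=
  exists N0 : nat, forall N : nat, (N0 <= N)%N -> s N = g.

(* Every normal-ordered product in L_1 pairs a creation mode of index -(k+1)
   with an annihilation mode of index k+2 (bosons) or k+3/2 (fermions), and
   the scalar prefactors of the two modes cancel up to sign and the weight in
   L_1; so each product is a multiple of x_{k+1} d/dx_{k+2} or of
   y_{k+1/2} d/dy_{k+3/2}.  Collecting the terms symmetrically around the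
   middle index gives, for the truncation at level N+1,
     L_1 = - D_F - 1/2 x_{N+1} d/dx_{N+2},
   and on a polynomial in the first N variables both the boundary term and
   the tail of D_F vanish, so both truncated sums are eventually constant. *)
From mathcomp Require Import all_boot all_order all_algebra algC.
From mathcomp Require Import zify ring.
From Stdlib Require Import FunctionalExtensionality.
Set Implicit Arguments. Unset Strict Implicit. Unset Printing Implicit Defensive.
Import Order.TTheory GRing.Theory Num.Theory.
Local Open Scope ring_scope.

Lemma sum_centered (V : nmodType) (G : int -> V) N :
  \sum_(i < (2 * N).+1) G (i%:Z - N%:Z) =
  \sum_(i < N) G (Negz i) + G 0 + \sum_(i < N) G (Posz i.+1).
Proof.
rewrite -(big_mkord xpredT (fun i : nat => G (i%:Z - N%:Z))).
rewrite (@big_cat_nat _ _ _ N) /=; [|lia|lia].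
rewrite (@big_ltn _ _ _ N); last by lia.
rewrite -addrA; congr (_ + _).
  rewrite big_nat_rev /= big_mkord; apply: eq_bigr => i _.
  by congr G; have := ltn_ord i; lia.
rewrite subrr; congr (_ + _).
rewrite -{1}(add0n N.+1) big_addn big_mkord.
have -> : ((2 * N).+1 - N.+1 = N)%N by lia.
by apply: eq_bigr => i _; congr G; lia.
Qed.

Lemma beta_neq0 : beta != 0.
Proof. by rewrite sqrtC_eq0 pnatr_eq0. Qed.

Lemma fact_neq0 n : (n`!)%:R != 0 :> algC.
Proof. by rewrite pnatr_eq0 -lt0n fact_gt0. Qed.

Lemma sign_add_succ k : (-1) ^+ (k + k.+1) = -1 :> algC.
Proof. by rewrite -signr_odd addnS /= addnn odd_double. Qed.

Definition xdx (k : nat) (f : F) : F := mulx k (dx k.+1 f).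
Definition ydy (k : nat) (f : F) : F := muly k (dy k.+1 f).

Lemma amode_Negz_Posz k n f a S :
  amode (Negz k) (amode (Posz n.+1) f) a S
  = (-1) ^+ (k + n) * ((k.+1)`!%:R / (n`!)%:R) * mulx k.+1 (dx n.+1 f) a S.
Proof.
rewrite /amode /Fscale /mulx; case: ifP => _; last by rewrite !mulr0.
by rewrite exprD; field; rewrite fact_neq0 beta_neq0.
Qed.

Lemma bmode_Negz_Posz m n f a S :
  bmode (Negz m) (bmode (Posz n) f) a S
  = (-1) ^+ (m + n) * ((m`!)%:R / (n`!)%:R) * muly m (dy n f) a S.
Proof.
rewrite /bmode /Fscale /muly; case: ifP => _; last by rewrite !mulr0.
by rewrite exprD; field; rewrite fact_neq0.
Qed.

Lemma amode_Negz_Posz_succ k f a S :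
  amode (Negz k) (amode (Posz k.+2) f) a S = - xdx k.+1 f a S.
Proof.
by rewrite amode_Negz_Posz sign_add_succ divff ?fact_neq0 // mulr1 mulN1r.
Qed.

Lemma bmode_Negz_Posz_succ m f a S :
  bmode (Negz m) (bmode (Posz m.+1) f) a S = - (m.+1%:R)^-1 * ydy m f a S.
Proof.
rewrite bmode_Negz_Posz sign_add_succ factS natrM /ydy.
by field; rewrite nat1r pnatr_eq0 fact_neq0.
Qed.

Lemma nop_a_Negz f a S i : nop_a (Negz i) (1 - Negz i) f a S = - xdx i.+1 f a S.
Proof.
have -> : 1 - Negz i = Posz i.+2 by rewrite NegzE; lia.
exact: amode_Negz_Posz_succ.
Qed.

Lemma nop_a_Posz f a S j :
  nop_a (Posz j.+2) (1 - Posz j.+2) f a S = - xdx j.+1 f a S.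
Proof.
have -> : 1 - Posz j.+2 = Negz j by rewrite NegzE; lia.
exact: amode_Negz_Posz_succ.
Qed.

Lemma nop_a_zero_mode f a S : nop_a 1 (1 - 1) f a S = 0.
Proof. by rewrite subrr /nop_a /= /amode /Fscale /dx /Fzero /= !mulr0. Qed.

Lemma nop_b_Negz f a S i :
  (1 - (2 * Negz i + 1))%:~R * nop_b (Negz i) (1 - 1 - Negz i) f a S
  = -2 * ydy i f a S.
Proof.
have -> : 1 - 1 - Negz i = Posz i.+1 by rewrite NegzE; lia.
have -> : 1 - (2 * Negz i + 1) = Posz (2 * i.+1) by rewrite NegzE; lia.
rewrite (_ : nop_b _ _ f a S = bmode (Negz i) (bmode (Posz i.+1) f) a S) //.
by rewrite bmode_Negz_Posz_succ -pmulrn natrM; field; rewrite nat1r pnatr_eq0.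
Qed.

Lemma nop_b_Posz f a S i :
  (1 - (2 * Posz i.+1 + 1))%:~R * nop_b (Posz i.+1) (1 - 1 - Posz i.+1) f a S
  = -2 * ydy i f a S.
Proof.
have -> : 1 - 1 - Posz i.+1 = Negz i by rewrite NegzE; lia.
have -> : 1 - (2 * Posz i.+1 + 1) = - Posz (2 * i.+1) by lia.
rewrite (_ : nop_b _ _ f a S = - bmode (Negz i) (bmode (Posz i.+1) f) a S) //.
by rewrite bmode_Negz_Posz_succ mulrNz -pmulrn natrM; field; rewrite nat1r pnatr_eq0.
Qed.

Lemma Ltrunc1_Dtrunc N f a S :
  Ltrunc 1 N.+1 f a S = - Dtrunc N.+1 f a S - 2^-1 * xdx N.+1 f a S.
Proof.
rewrite /Ltrunc (@sum_centered _ (fun m => nop_a m (1 - m) f a S)).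
rewrite (@sum_centered _ (fun m => (1 - (2 * m + 1))%:~R * nop_b m (1 - 1 - m) f a S)).
have -> : nop_a 0 (1 - 0) f a S = 0 by [].
have -> : (1 - (2 * 0 + 1))%:~R = 0 :> algC by [].
rewrite mul0r !addr0.
rewrite (eq_bigr _ (fun (i : 'I_N.+1) _ => nop_a_Negz f a S i)).
rewrite (eq_bigr _ (fun (i : 'I_N.+1) _ => nop_b_Posz f a S i)).
rewrite (eq_bigr _ (fun (i : 'I_N.+1) _ => nop_b_Negz f a S i)).
rewrite [X in 2^-1 * (_ + X)]big_ord_recl /= nop_a_zero_mode add0r.
rewrite (eq_bigr _ (fun (j : 'I_N) _ => nop_a_Posz f a S j)).
rewrite /Dtrunc big_add1 /= !big_mkord big_ord_recr /= !sumrN -!mulr_sumr.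
rewrite -/(xdx _ _) -/(ydy _ _).
move: (\sum_(i < N) _) (\sum_(i < N.+1) _) => A B.
by field.
Qed.

Definition supported_below (N : nat) (f : F) : Prop :=
  forall alpha S, f alpha S != 0 ->
    forall i, (N <= i)%N -> alpha i = 0%N /\ S i = false.

Lemma inF_supported_below f : inF f -> exists N, supported_below N f.
Proof. by case=> N hN; exists N => alpha S /hN []. Qed.

Section SupportedBelow.
Variables (N : nat) (f : F).
Hypothesis f_supp : supported_below N f.

Lemma supported_below_eq0 alpha S i :
  (N <= i)%N -> (alpha i != 0%N) || S i -> f alpha S = 0.
Proof.
by move=> hi; apply: contraTeq => /f_supp /(_ i hi) [-> ->].
Qed.

Lemma dx_supported_below n a S : (N <= n)%N -> dx n f a S = 0.
Proof.
by move=> hn; rewrite /dx (@supported_below_eq0 _ _ n hn) ?mulr0 //= eqxx addn1.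
Qed.

Lemma dy_supported_below m a S : (N <= m)%N -> dy m f a S = 0.
Proof.
move=> hm; rewrite /dy; case: ifP => // _.
by rewrite (@supported_below_eq0 _ _ m hm) ?mulr0 //= eqxx !orbT.
Qed.

Lemma xdx_supported_below k a S : (N <= k.+1)%N -> xdx k f a S = 0.
Proof. by move=> hk; rewrite /xdx /mulx dx_supported_below ?if_same. Qed.

Lemma ydy_supported_below k a S : (N <= k.+1)%N -> ydy k f a S = 0.
Proof. by move=> hk; rewrite /ydy /muly dy_supported_below ?mulr0 ?if_same. Qed.

Lemma Dtrunc_stable M a S : (N < M)%N -> Dtrunc M f a S = Dtrunc N.+1 f a S.
Proof.
move=> hM; rewrite /Dtrunc.
rewrite (@big_cat_nat _ _ _ N.+1 1 M) //= (@big_cat_nat _ _ _ N.+1 0 M) //=.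
rewrite [X in _ + X + _]big1_seq ?addr0; last first.
  move=> n /andP[_]; rewrite mem_index_iota => /andP[hn _].
  by apply: xdx_supported_below; lia.
rewrite [X in _ + (_ + X)]big1_seq ?addr0 //.
move=> n /andP[_]; rewrite mem_index_iota => /andP[hn _].
by apply: ydy_supported_below; lia.
Qed.

End SupportedBelow.

Theorem proposition5p11 : forall f : F, inF f ->
  exists g : F,
    sums_to (fun N => Ltrunc 1 N f) g /\ sums_to (fun N => Fopp (Dtrunc N f)) g.
Proof.
move=> f /inF_supported_below [N f_supp].
exists (Fopp (Dtrunc N.+1 f)); split; exists N.+1 => M hM;
  apply: functional_extensionality => a; apply: functional_extensionality => S.
  case: M hM => // M hM.
  rewrite Ltrunc1_Dtrunc (xdx_supported_below f_supp) ?mulr0 ?subr0; last by lia.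
  by rewrite (Dtrunc_stable f_supp).
by rewrite /Fopp (Dtrunc_stable f_supp).
Qed.
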